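(* An abelian $\ell$-group with strong unit is a finitely presentable object of the category of abelian $\ell$-groups with strong unit (and unital $\ell$-group homomorphisms) if and only if it is finitely presentable (equivalently, finitely presented) as an abelian $\ell$-group with unit.
   Context: An abelian $\ell$-group with unit is an abelian group with a translation-invariant lattice order and a distinguished element $u\ge0$; the unit is strong if for every $x$ there is $n\in\mathbb{N}$ with $x\le nu$. Morphisms are lattice-ordered group homomorphisms preserving the unit. An object $M$ of a category is finitely presentable if $\mathrm{Hom}(M,-)$ preserves filtered colimits. *)

Set Implicit Arguments.
Unset Strict Implicit.

Record ULG := {
  car :> Type;
  zero : car;
  add : car -> car -> car;
  opp : car -> car;
  meet : car -> car -> car;
  join : car -> car -> car;
  unit : car;
  addA : forall x y z, add x (add y z) = add (add x y) z;
  addC : forall x y, add x y = add y x;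
  add0 : forall x, add zero x = x;
  addN : forall x, add (opp x) x = zero;
  meetC : forall x y, meet x y = meet y x;
  joinC : forall x y, join x y = join y x;
  meetA : forall x y z, meet x (meet y z) = meet (meet x y) z;
  joinA : forall x y z, join x (join y z) = join (join x y) z;
  meet_join : forall x y, meet x (join x y) = x;
  join_meet : forall x y, join x (meet x y) = x;
  (* translation invariance of the lattice order x <= y :<-> meet x y = x *)
  le_add : forall x y z, meet x y = x -> meet (add x z) (add y z) = add x z;
  unit_ge0 : meet zero unit = zero
}.

Definition leq (G : ULG) (x y : G) : Prop := meet x y = x.

Fixpoint nsmul (G : ULG) (n : nat) (x : G) : G :=
  match n with O => zero G | S m => add x (nsmul m x) end.

Definition strong_unit (G : ULG) : Prop :=
  forall x : G, exists n : nat, leq x (nsmul n (unit G)).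

Record UHom (A B : ULG) := {
  hfun :> A -> B;
  h_add : forall x y, hfun (add x y) = add (hfun x) (hfun y);
  h_meet : forall x y, hfun (meet x y) = meet (hfun x) (hfun y);
  h_join : forall x y, hfun (join x y) = join (hfun x) (hfun y);
  h_unit : hfun (unit A) = unit B
}.

Definition ucomp (A B C : ULG) (g : UHom B C) (f : UHom A B) : UHom A C.
Proof.
  refine {| hfun := fun x => g (f x) |}.
  - intros x y; rewrite (h_add f), (h_add g); reflexivity.
  - intros x y; rewrite (h_meet f), (h_meet g); reflexivity.
  - intros x y; rewrite (h_join f), (h_join g); reflexivity.
  - rewrite (h_unit f), (h_unit g); reflexivity.
Defined.

Record Cat := {
  ob : Type;
  hom : ob -> ob -> Type;
  idc : forall a, hom a a;
  comp : forall a b c, hom b c -> hom a b -> hom a c;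
  comp_id_l : forall a b (f : hom a b), comp (idc b) f = f;
  comp_id_r : forall a b (f : hom a b), comp f (idc a) = f;
  comp_assoc : forall a b c d (f : hom a b) (g : hom b c) (h : hom c d),
      comp h (comp g f) = comp (comp h g) f
}.

Definition filtered (C : Cat) : Prop :=
  inhabited (ob C) /\
  (forall a b : ob C, exists c, inhabited (hom a c) /\ inhabited (hom b c)) /\
  (forall (a b : ob C) (f g : hom a b),
      exists c (h : hom b c), comp h f = comp h g).

Record Diagram (C : Cat) := {
  dob : ob C -> ULG;
  dmap : forall a b, hom a b -> UHom (dob a) (dob b);
  dmap_id : forall a (x : dob a), dmap (idc a) x = x;
  dmap_comp : forall a b c (f : hom a b) (g : hom b c) (x : dob a),
      dmap (comp g f) x = dmap g (dmap f x)
}.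

Definition cocone (C : Cat) (D : Diagram C) (L : ULG)
    (lam : forall a, UHom (dob D a) L) : Prop :=
  forall a b (f : hom a b) (x : dob D a), lam b (dmap D f x) = lam a x.

(* (L, lam) is a colimit of D in the full subcategory of those unital
   l-groups satisfying P (P L is required separately). *)
Definition is_colimit_in (P : ULG -> Prop) (C : Cat) (D : Diagram C) (L : ULG)
    (lam : forall a, UHom (dob D a) L) : Prop :=
  cocone lam /\
  forall (N : ULG) (mu : forall a, UHom (dob D a) N), P N -> cocone mu ->
    (exists phi : UHom L N, forall a x, phi (lam a x) = mu a x) /\
    (forall phi psi : UHom L N,
        (forall a x, phi (lam a x) = mu a x) ->
        (forall a x, psi (lam a x) = mu a x) ->
        forall y, phi y = psi y).

(* The image under Hom(M,-) of the cocone (L, lam) is a colimit in Set: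
   universal property against every type X. *)
Definition hom_preserves (C : Cat) (D : Diagram C) (M L : ULG)
    (lam : forall a, UHom (dob D a) L) : Prop :=
  forall (X : Type) (c : forall a, UHom M (dob D a) -> X),
    (forall a b (f : hom a b) (g : UHom M (dob D a)),
        c b (ucomp (dmap D f) g) = c a g) ->
    (exists phi : UHom M L -> X,
        forall a (g : UHom M (dob D a)), phi (ucomp (lam a) g) = c a g) /\
    (forall phi psi : UHom M L -> X,
        (forall a g, phi (ucomp (lam a) g) = c a g) ->
        (forall a g, psi (ucomp (lam a) g) = c a g) ->
        forall h, phi h = psi h).

(* M is finitely presentable in the full subcategory of objects satisfying P
   (M itself is assumed to satisfy P where this is used): Hom(M,-)
   preserves all filtered colimits in that category. *)
Definition fin_presentable_in (P : ULG -> Prop) (M : ULG) : Prop :=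
  forall (C : Cat) (D : Diagram C) (L : ULG)
         (lam : forall a, UHom (dob D a) L),
    filtered C -> (forall a, P (dob D a)) -> P L ->
    is_colimit_in P lam -> hom_preserves M lam.

Definition strong_cat : ULG -> Prop := strong_unit.
Definition unital_cat : ULG -> Prop := fun _ => True.

From Stdlib Require Import PeanoNat ClassicalEpsilon ProofIrrelevance.
From Stdlib Require Import FunctionalExtensionality PropExtensionality.
Set Implicit Arguments.
Unset Strict Implicit.

(* The elements x of a unital l-group N with -nu <= x <= nu for some n form
   an l-group N^s with strong unit, and N |-> N^s is right adjoint to the
   inclusion of the strong-unit category: for strong A, unital maps A -> N
   are the same as maps A -> N^s.  Hence a colimit of strong objects taken
   among strong objects is also a colimit among all unital ones, and
   finite presentability among unital objects restricts to strong ones.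
   Conversely, filtered colimits of unital l-groups are computed as in sets:
   every element comes from some stage, and two elements identified in the
   colimit already agree at a later stage.  An element of L^s bounded by nu
   is the image of the clamp (x /\ nu) \/ -nu of any preimage x, so (-)^s
   preserves filtered colimits, and Hom(M, -) = Hom(M, (-)^s) for strong M
   transfers finite presentability back. *)

Section GroupLaws.
Variable G : ULG.
Implicit Types x y z : G.

Lemma addr0 x : add x (zero G) = x.
Proof. rewrite addC; apply add0. Qed.

Lemma addrN x : add x (opp x) = zero G.
Proof. rewrite addC; apply addN. Qed.

Lemma addrI z x y : add z x = add z y -> x = y.
Proof.
  intro E. rewrite <- (add0 x), <- (add0 y), <- (addN z), <- !addA, E. reflexivity.
Qed.

Lemma opp_unique x y : add x y = zero G -> y = opp x.
Proof. intro E. apply (@addrI x). rewrite E, addrN. reflexivity. Qed.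

Lemma oppK x : opp (opp x) = x.
Proof. symmetry. apply opp_unique, addN. Qed.

Lemma oppD x y : opp (add x y) = add (opp x) (opp y).
Proof.
  symmetry. apply opp_unique.
  rewrite (addC (opp x)), addA, <- (addA x y), addrN, addr0, addrN. reflexivity.
Qed.

Lemma oppr0 : opp (zero G) = zero G.
Proof. symmetry. apply opp_unique, add0. Qed.

Lemma nsmulD n m x : nsmul (n + m) x = add (nsmul n x) (nsmul m x).
Proof. induction n as [|n IH]; simpl; [symmetry; apply add0 | rewrite IH, addA; reflexivity]. Qed.

End GroupLaws.

Section LatticeOrder.
Variable G : ULG.
Implicit Types x y z : G.

Lemma meet_id x : meet x x = x.
Proof.
  transitivity (meet x (join x (meet x x))); [rewrite join_meet; reflexivity | apply meet_join].
Qed.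

Lemma le_refl x : leq x x.
Proof. apply meet_id. Qed.

Lemma le_trans x y z : leq x y -> leq y z -> leq x z.
Proof. unfold leq; intros Hxy Hyz. rewrite <- Hxy, <- meetA, Hyz. reflexivity. Qed.

Lemma meet_le_l x y : leq (meet x y) x.
Proof. unfold leq. rewrite (meetC x y), <- meetA, meet_id. reflexivity. Qed.

Lemma meet_le_r x y : leq (meet x y) y.
Proof. unfold leq. rewrite <- meetA, meet_id. reflexivity. Qed.

Lemma le_meet x y z : leq z x -> leq z y -> leq z (meet x y).
Proof. unfold leq; intros Hx Hy. rewrite meetA, Hx, Hy. reflexivity. Qed.

Lemma leq_join x y : leq x y <-> join x y = y.
Proof.
  unfold leq; split; intro E.
  - rewrite <- E, joinC, meetC. apply join_meet.
  - rewrite <- E. apply meet_join.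
Qed.

Lemma join_le_r x y : leq y (join x y).
Proof. rewrite joinC. apply meet_join. Qed.

Lemma join_le x y z : leq x z -> leq y z -> leq (join x y) z.
Proof. rewrite !leq_join; intros Hx Hy. rewrite <- joinA, Hy, Hx. reflexivity. Qed.

Lemma le_addl x y z : leq x y -> leq (add z x) (add z y).
Proof. intro Hxy. rewrite !(addC z). apply le_add, Hxy. Qed.

Lemma le_add2 x y z t : leq x y -> leq z t -> leq (add x z) (add y t).
Proof.
  intros Hxy Hzt. apply le_trans with (add y z); [apply le_add, Hxy | apply le_addl, Hzt].
Qed.

Lemma le_opp x y : leq x y -> leq (opp y) (opp x).
Proof.
  intro Hxy. apply (@le_add _ _ _ (add (opp x) (opp y))) in Hxy.
  rewrite addA, addrN, add0, (addC (opp x)), addA, addrN, add0 in Hxy. exact Hxy.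
Qed.

Lemma le_oppl x y : leq (opp x) y -> leq (opp y) x.
Proof. intro Hxy. rewrite <- (oppK x). apply le_opp, Hxy. Qed.

Lemma nsmul_unit_ge0 n : leq (zero G) (nsmul n (unit G)).
Proof.
  induction n as [|n IH]; simpl; [apply le_refl|].
  rewrite <- (add0 (zero G)). apply le_add2; [apply unit_ge0 | exact IH].
Qed.

Lemma nsmul_unit_mono n m : n <= m -> leq (nsmul n (unit G)) (nsmul m (unit G)).
Proof.
  induction 1 as [|m _ IH]; [apply le_refl|].
  apply (le_trans IH). simpl. rewrite <- (add0 (nsmul m (unit G))) at 1.
  apply le_add, unit_ge0.
Qed.

End LatticeOrder.

Section Homomorphisms.
Variables (A B : ULG) (h : UHom A B).

Lemma h_zero : h (zero A) = zero B.
Proof. apply (@addrI _ (h (zero A))). rewrite <- h_add, add0, addr0. reflexivity. Qed.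

Lemma h_opp x : h (opp x) = opp (h x).
Proof. apply opp_unique. rewrite <- h_add, addrN. apply h_zero. Qed.

Lemma h_nsmul n x : h (nsmul n x) = nsmul n (h x).
Proof. induction n as [|n IH]; simpl; [apply h_zero | rewrite h_add, IH; reflexivity]. Qed.

Lemma h_le x y : leq x y -> leq (h x) (h y).
Proof. unfold leq; intro E. rewrite <- h_meet, E. reflexivity. Qed.

End Homomorphisms.

Lemma uhom_ext (A B : ULG) (f g : UHom A B) : (forall x, f x = g x) -> f = g.
Proof.
  destruct f as [f f1 f2 f3 f4], g as [g g1 g2 g3 g4]; simpl; intro E.
  assert (f = g) by (apply functional_extensionality, E). subst.
  f_equal; apply proof_irrelevance.
Qed.

Definition uid (A : ULG) : UHom A A.
Proof. refine {| hfun := fun x => x |}; reflexivity. Defined.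

Section Bounded.
Variable G : ULG.
Implicit Types x y : G.

Definition bounded_by (n : nat) x : Prop :=
  leq (opp (nsmul n (unit G))) x /\ leq x (nsmul n (unit G)).

Definition bounded x : Prop := exists n, bounded_by n x.

Lemma bounded_by_mono n m x : n <= m -> bounded_by n x -> bounded_by m x.
Proof.
  intros Hnm [Hlo Hhi]. pose proof (nsmul_unit_mono G Hnm) as Hle.
  split; [apply le_trans with (2 := Hlo), le_opp, Hle | apply (le_trans Hhi Hle)].
Qed.

Lemma bounded_common x y :
  bounded x -> bounded y -> exists n, bounded_by n x /\ bounded_by n y.
Proof.
  intros [n Hx] [m Hy]. exists (n + m).
  split; [apply (bounded_by_mono (Nat.le_add_r n m) Hx)
         | apply (bounded_by_mono (Nat.le_add_l m n) Hy)].
Qed.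

Lemma opp_nsmul_unit_le n : leq (opp (nsmul n (unit G))) (nsmul n (unit G)).
Proof.
  apply le_trans with (zero G); [|apply nsmul_unit_ge0].
  rewrite <- (oppr0 G). apply le_opp, nsmul_unit_ge0.
Qed.

Lemma bounded_zero : bounded (zero G).
Proof. exists 0. unfold bounded_by; simpl. rewrite oppr0. split; apply le_refl. Qed.

Lemma bounded_unit : bounded (unit G).
Proof.
  exists 1. pose proof (opp_nsmul_unit_le 1) as Hle.
  unfold bounded_by; simpl in *. rewrite addr0 in *. split; [exact Hle | apply le_refl].
Qed.

Lemma bounded_add x y : bounded x -> bounded y -> bounded (add x y).
Proof.
  intros [n [Hx1 Hx2]] [m [Hy1 Hy2]]. exists (n + m). unfold bounded_by.
  rewrite nsmulD, oppD. split; apply le_add2; assumption.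
Qed.

Lemma bounded_opp x : bounded x -> bounded (opp x).
Proof.
  intros [n [Hlo Hhi]]. exists n. split; [apply le_opp, Hhi | apply le_oppl, Hlo].
Qed.

Lemma bounded_meet x y : bounded x -> bounded y -> bounded (meet x y).
Proof.
  intros Hx Hy. destruct (bounded_common Hx Hy) as [n [[Hx1 Hx2] [Hy1 Hy2]]].
  exists n. split; [apply le_meet; assumption | apply (le_trans (meet_le_l x y) Hx2)].
Qed.

Lemma bounded_join x y : bounded x -> bounded y -> bounded (join x y).
Proof.
  intros Hx Hy. destruct (bounded_common Hx Hy) as [n [[Hx1 Hx2] [Hy1 Hy2]]].
  exists n. split; [apply (le_trans Hy1 (join_le_r x y)) | apply join_le; assumption].
Qed.

Lemma strong_unit_bounded : strong_unit G -> forall x, bounded x.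
Proof.
  intros HG x. destruct (HG x) as [n Hn], (HG (opp x)) as [m Hm]. exists (n + m). split.
  - apply le_oppl, (le_trans Hm), nsmul_unit_mono, Nat.le_add_l.
  - apply (le_trans Hn), nsmul_unit_mono, Nat.le_add_r.
Qed.

Definition clamp (n : nat) x : G :=
  join (meet x (nsmul n (unit G))) (opp (nsmul n (unit G))).

Lemma clamp_bounded_by n x : bounded_by n (clamp n x).
Proof. split; [apply join_le_r | apply join_le; [apply meet_le_r | apply opp_nsmul_unit_le]]. Qed.

Lemma clamp_id n x : bounded_by n x -> clamp n x = x.
Proof. intros [Hlo Hhi]. unfold clamp. rewrite Hhi, joinC. apply leq_join, Hlo. Qed.

End Bounded.

Lemma h_clamp (A B : ULG) (h : UHom A B) n (x : A) : h (clamp n x) = clamp n (h x).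
Proof. unfold clamp. rewrite h_join, h_meet, h_opp, h_nsmul, h_unit. reflexivity. Qed.

Lemma h_bounded (A B : ULG) (h : UHom A B) (x : A) : bounded x -> bounded (h x).
Proof.
  intros [n [Hlo Hhi]]. exists n.
  unfold bounded_by. rewrite <- (h_unit h), <- h_nsmul, <- h_opp. split; apply h_le; assumption.
Qed.


Lemma val_inj (A : Type) (P : A -> Prop) (u v : {x | P x}) :
  proj1_sig u = proj1_sig v -> u = v.
Proof. apply eq_sig_hprop. intros; apply proof_irrelevance. Qed.

Definition bounded_part (N : ULG) : ULG.
Proof.
  refine {| car := {x : N | bounded x};
    zero := exist _ (zero N) (bounded_zero N);
    add := fun x y => exist _ _ (bounded_add (proj2_sig x) (proj2_sig y));
    opp := fun x => exist _ _ (bounded_opp (proj2_sig x));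
    meet := fun x y => exist _ _ (bounded_meet (proj2_sig x) (proj2_sig y));
    join := fun x y => exist _ _ (bounded_join (proj2_sig x) (proj2_sig y));
    unit := exist _ (unit N) (bounded_unit N) |};
  intros; apply val_inj; simpl.
  - apply addA.
  - apply addC.
  - apply add0.
  - apply addN.
  - apply meetC.
  - apply joinC.
  - apply meetA.
  - apply joinA.
  - apply meet_join.
  - apply join_meet.
  - apply le_add. match goal with E : _ = _ |- _ => exact (f_equal (@proj1_sig _ _) E) end.
  - apply unit_ge0.
Defined.

Lemma bounded_part_nsmul_unit (N : ULG) n :
  proj1_sig (nsmul n (unit (bounded_part N))) = nsmul n (unit N).
Proof. induction n as [|n IH]; simpl; [reflexivity | f_equal; exact IH]. Qed.

Lemma bounded_part_strong (N : ULG) : strong_unit (bounded_part N).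
Proof.
  intros [x [n [Hlo Hhi]]]. exists n. apply val_inj. simpl.
  rewrite bounded_part_nsmul_unit. exact Hhi.
Qed.

Definition bounded_incl (N : ULG) : UHom (bounded_part N) N.
Proof. refine {| hfun := fun x : bounded_part N => proj1_sig x |}; reflexivity. Defined.

(* The adjoint transpose: [bounded_part] is right adjoint to the inclusion of
   the strong-unit category. *)
Definition bounded_corestr (A N : ULG) (HA : strong_unit A) (h : UHom A N) :
  UHom A (bounded_part N).
Proof.
  refine {| hfun := fun x => exist _ (h x) (h_bounded h (strong_unit_bounded HA x))
                             : bounded_part N |};
  intros; apply val_inj; simpl.
  - apply h_add.
  - apply h_meet.
  - apply h_join.
  - apply h_unit.
Defined.

Definition bounded_map (A B : ULG) (h : UHom A B) : UHom (bounded_part A) (bounded_part B) :=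
  bounded_corestr (@bounded_part_strong A) (ucomp h (bounded_incl A)).

Lemma colimit_strong_unital (C : Cat) (D : Diagram C) (L : ULG)
    (lam : forall a, UHom (dob D a) L) :
  (forall a, strong_unit (dob D a)) -> strong_unit L ->
  is_colimit_in strong_cat lam -> is_colimit_in unital_cat lam.
Proof.
  intros HD HL [Hlam Huniv]. split; [exact Hlam|]. intros N mu _ Hmu.
  pose (mu' a := bounded_corestr (HD a) (mu a)).
  assert (Hmu' : cocone mu') by (intros a b f x; apply val_inj, Hmu).
  destruct (Huniv _ mu' (@bounded_part_strong N) Hmu') as [[phi Hphi] Huniq]. split.
  - exists (ucomp (bounded_incl N) phi). intros a x. simpl. rewrite Hphi. reflexivity.
  - intros phi1 phi2 H1 H2 y.
    assert (E : bounded_corestr HL phi1 y = bounded_corestr HL phi2 y)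
      by (apply Huniq; intros a x; apply val_inj; simpl; auto).
    exact (f_equal (@proj1_sig _ _) E).
Qed.

Lemma fin_presentable_strong_of_unital (M : ULG) :
  fin_presentable_in unital_cat M -> fin_presentable_in strong_cat M.
Proof.
  intros HM C D L lam HC HD HL Hcolim.
  apply (HM C D L lam HC (fun _ => I) I), colimit_strong_unital; assumption.
Qed.

Definition natural0 (k : forall G : ULG, G) : Prop :=
  forall (A B : ULG) (h : UHom A B), h (k A) = k B.
Definition natural1 (f : forall G : ULG, G -> G) : Prop :=
  forall (A B : ULG) (h : UHom A B) x, h (f A x) = f B (h x).
Definition natural2 (f : forall G : ULG, G -> G -> G) : Prop :=
  forall (A B : ULG) (h : UHom A B) x y, h (f A x y) = f B (h x) (h y).

Lemma natural0_zero : natural0 zero.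
Proof. intros A B h. apply h_zero. Qed.
Lemma natural0_unit : natural0 unit.
Proof. intros A B h. apply h_unit. Qed.
Lemma natural1_opp : natural1 opp.
Proof. intros A B h x. apply h_opp. Qed.
Lemma natural2_add : natural2 add.
Proof. intros A B h x y. apply h_add. Qed.
Lemma natural2_meet : natural2 meet.
Proof. intros A B h x y. apply h_meet. Qed.
Lemma natural2_join : natural2 join.
Proof. intros A B h x y. apply h_join. Qed.

Section DiagramElements.
Variables (C : Cat) (D : Diagram C).

Definition eventually_eq (a : ob C) (x : dob D a) (b : ob C) (y : dob D b) : Prop :=
  exists c (f : hom a c) (g : hom b c), dmap D f x = dmap D g y.

Variables (L : ULG) (lam : forall a, UHom (dob D a) L).

Definition jointly_surjective : Prop := forall y : L, exists a (x : dob D a), lam a x = y.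

Definition equal_eventually : Prop :=
  forall a b (x : dob D a) (y : dob D b), lam a x = lam b y -> eventually_eq x y.

End DiagramElements.

Section ConcreteColimit.
Variables (C : Cat) (D : Diagram C) (L : ULG) (lam : forall a, UHom (dob D a) L).
Hypotheses (HC : filtered C) (Hlam : cocone lam)
  (Hsurj : jointly_surjective lam) (Heq : equal_eventually lam).

Lemma common_preimage (y1 y2 : L) :
  exists c (x1 x2 : dob D c), lam c x1 = y1 /\ lam c x2 = y2.
Proof.
  destruct (Hsurj y1) as [a [x1 <-]], (Hsurj y2) as [b [x2 <-]].
  destruct HC as [_ [Hup _]]. destruct (Hup a b) as [c [[f] [g]]].
  exists c, (dmap D f x1), (dmap D g x2). split; apply Hlam.
Qed.

Lemma preimage_ex (y : L) : exists s : {a : ob C & dob D a}, lam _ (projT2 s) = y.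
Proof. destruct (Hsurj y) as [a [x E]]. exists (existT _ a x). exact E. Qed.

Definition preimage (y : L) : {a : ob C & dob D a} :=
  proj1_sig (constructive_indefinite_description _ (preimage_ex y)).

Lemma lam_preimage (y : L) : lam _ (projT2 (preimage y)) = y.
Proof. exact (proj2_sig (constructive_indefinite_description _ (preimage_ex y))). Qed.

Variables (N : ULG) (mu : forall a, UHom (dob D a) N).
Hypothesis Hmu : cocone mu.

Definition factor (y : L) : N := mu _ (projT2 (preimage y)).

Lemma factor_lam a (x : dob D a) : factor (lam a x) = mu a x.
Proof.
  unfold factor. destruct (Heq (lam_preimage (lam a x))) as [c [f [g E]]].
  rewrite <- (Hmu f), <- (Hmu g), E. reflexivity.
Qed.

Lemma factor_natural2 bop : natural2 bop ->
  forall y1 y2, factor (bop L y1 y2) = bop N (factor y1) (factor y2).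
Proof.
  intros Hbop y1 y2. destruct (common_preimage y1 y2) as [c [x1 [x2 [<- <-]]]].
  rewrite <- Hbop, !factor_lam, Hbop. reflexivity.
Qed.

Definition factor_hom : UHom L N.
Proof.
  refine {| hfun := factor;
    h_add := factor_natural2 natural2_add;
    h_meet := factor_natural2 natural2_meet;
    h_join := factor_natural2 natural2_join |}.
  destruct HC as [[a] _]. rewrite <- (h_unit (lam a)), factor_lam. apply h_unit.
Defined.

End ConcreteColimit.

Lemma concrete_colimit (P : ULG -> Prop) (C : Cat) (D : Diagram C) (L : ULG)
    (lam : forall a, UHom (dob D a) L) :
  filtered C -> cocone lam -> jointly_surjective lam -> equal_eventually lam ->
  is_colimit_in P lam.
Proof.
  intros HC Hlam Hsurj Heq. split; [exact Hlam|]. intros N mu _ Hmu. split.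
  - exists (factor_hom HC Hlam Hsurj Heq Hmu). intros a x. apply factor_lam; assumption.
  - intros phi psi Hphi Hpsi y. destruct (Hsurj y) as [a [x <-]].
    rewrite Hphi, Hpsi. reflexivity.
Qed.

Section FilteredColimit.
Variables (C : Cat) (D : Diagram C).
Hypothesis HC : filtered C.
Implicit Types a b c : ob C.

Lemma filtered_square a b c (f : hom a b) (g : hom a c) :
  exists d (h : hom b d) (k : hom c d), comp h f = comp k g.
Proof.
  destruct HC as [_ [Hup Heq]]. destruct (Hup b c) as [d [[h] [k]]].
  destruct (Heq _ _ (comp h f) (comp k g)) as [e [w Hw]].
  exists e, (comp w h), (comp w k). rewrite <- !comp_assoc. exact Hw.
Qed.

Lemma eventually_eq_refl a (x : dob D a) : eventually_eq x x.
Proof. exists a, (idc a), (idc a). reflexivity. Qed.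

Lemma eventually_eq_sym a b (x : dob D a) (y : dob D b) :
  eventually_eq x y -> eventually_eq y x.
Proof. intros [c [f [g E]]]. exists c, g, f. symmetry. exact E. Qed.

Lemma eventually_eq_trans a b c (x : dob D a) (y : dob D b) (z : dob D c) :
  eventually_eq x y -> eventually_eq y z -> eventually_eq x z.
Proof.
  intros [d1 [f1 [g1 E1]]] [d2 [f2 [g2 E2]]].
  destruct (filtered_square g1 f2) as [d [h1 [h2 Hh]]].
  exists d, (comp h1 f1), (comp h2 g2).
  rewrite !dmap_comp, E1, <- E2, <- !dmap_comp, Hh. reflexivity.
Qed.

Lemma eventually_eq_dmap a b (f : hom a b) (x : dob D a) : eventually_eq x (dmap D f x).
Proof. exists b, f, (idc b). rewrite dmap_id. reflexivity. Qed.

Lemma eventually_eq_along a b (x : dob D a) (y : dob D b) c (f : hom a c) (g : hom b c) :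
  eventually_eq x y -> exists e (h : hom c e), dmap D h (dmap D f x) = dmap D h (dmap D g y).
Proof.
  intros [d [f' [g' E]]].
  destruct (filtered_square f f') as [d1 [u [v Huv]]].
  destruct HC as [_ [_ Heq]]. destruct (Heq _ _ (comp u g) (comp v g')) as [e [w Hw]].
  exists e, (comp w u).
  rewrite <- !dmap_comp, <- !comp_assoc, Huv, Hw, !dmap_comp, E. reflexivity.
Qed.

Lemma eventually_eq_natural1 uop : natural1 uop ->
  forall a b (x : dob D a) (y : dob D b),
  eventually_eq x y -> eventually_eq (uop _ x) (uop _ y).
Proof. intros Huop a b x y [c [f [g E]]]. exists c, f, g. rewrite !Huop, E. reflexivity. Qed.

Lemma eventually_eq_natural2 bop : natural2 bop ->
  forall a b (x1 x2 : dob D a) (y1 y2 : dob D b),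
  eventually_eq x1 y1 -> eventually_eq x2 y2 -> eventually_eq (bop _ x1 x2) (bop _ y1 y2).
Proof.
  intros Hbop a b x1 x2 y1 y2 [c [f [g E1]]] E2.
  destruct (eventually_eq_along f g E2) as [e [h Eh]].
  exists e, (comp h f), (comp h g). rewrite !dmap_comp, !Hbop, E1, Eh. reflexivity.
Qed.

(* The quotient by [eventually_eq], encoded as its set of equivalence classes. *)
Definition colim_car : Type :=
  {P : forall b, dob D b -> Prop | exists a (x : dob D a), P = eventually_eq x}.

Definition cl a (x : dob D a) : colim_car :=
  exist _ (eventually_eq x) (ex_intro _ a (ex_intro _ x eq_refl)).

Lemma cl_eq a b (x : dob D a) (y : dob D b) : eventually_eq x y -> cl x = cl y.
Proof.
  intro Exy. apply val_inj. simpl.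
  apply functional_extensionality_dep. intro c. apply functional_extensionality. intro z.
  apply propositional_extensionality. split; intro E.
  - apply (eventually_eq_trans (eventually_eq_sym Exy) E).
  - apply (eventually_eq_trans Exy E).
Qed.

Lemma cl_inj a b (x : dob D a) (y : dob D b) : cl x = cl y -> eventually_eq x y.
Proof.
  intro E. apply (f_equal (@proj1_sig _ _)) in E. simpl in E.
  rewrite E. apply eventually_eq_refl.
Qed.

Lemma cl_surj (p : colim_car) : exists s : {a : ob C & dob D a}, p = cl (projT2 s).
Proof. destruct p as [P [a [x E]]]. exists (existT _ a x). apply val_inj. exact E. Qed.

Lemma cl_dmap a b (f : hom a b) (x : dob D a) : cl (dmap D f x) = cl x.
Proof. symmetry. apply cl_eq, eventually_eq_dmap. Qed.

Lemma cl_common2 (p q : colim_car) :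
  exists c (x y : dob D c), p = cl x /\ q = cl y.
Proof.
  destruct (cl_surj p) as [[a x] ->], (cl_surj q) as [[b y] ->].
  destruct HC as [_ [Hup _]]. destruct (Hup a b) as [c [[f] [g]]].
  exists c, (dmap D f x), (dmap D g y). split; symmetry; apply cl_dmap.
Qed.

Lemma cl_common3 (p q r : colim_car) :
  exists c (x y z : dob D c), p = cl x /\ q = cl y /\ r = cl z.
Proof.
  destruct (cl_common2 p q) as [a [x [y [-> ->]]]], (cl_surj r) as [[b z] ->].
  destruct HC as [_ [Hup _]]. destruct (Hup a b) as [c [[f] [g]]].
  exists c, (dmap D f x), (dmap D f y), (dmap D g z). split; [|split]; symmetry; apply cl_dmap.
Qed.

Definition rep (p : colim_car) : {a : ob C & dob D a} :=
  proj1_sig (constructive_indefinite_description _ (cl_surj p)).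

Lemma rep_cl a (x : dob D a) : eventually_eq (projT2 (rep (cl x))) x.
Proof.
  apply cl_inj. symmetry.
  exact (proj2_sig (constructive_indefinite_description _ (cl_surj (cl x)))).
Qed.

Lemma upper_bound_inhabited a b : inhabited {c : ob C & (hom a c * hom b c)%type}.
Proof.
  destruct HC as [_ [Hup _]]. destruct (Hup a b) as [c [[f] [g]]].
  exact (inhabits (existT _ c (f, g))).
Qed.

Definition upper_bound a b : {c : ob C & (hom a c * hom b c)%type} :=
  epsilon (upper_bound_inhabited a b) (fun _ => True).

Definition lift0 (k : forall G : ULG, G) : colim_car :=
  cl (k (dob D (epsilon (proj1 HC) (fun _ => True)))).

Definition lift1 (uop : forall G : ULG, G -> G) (p : colim_car) : colim_car :=
  cl (uop _ (projT2 (rep p))).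

Definition lift2 (bop : forall G : ULG, G -> G -> G) (p q : colim_car) : colim_car :=
  let s := rep p in let t := rep q in let u := upper_bound (projT1 s) (projT1 t) in
  cl (bop _ (dmap D (fst (projT2 u)) (projT2 s)) (dmap D (snd (projT2 u)) (projT2 t))).

Lemma lift0_cl k : natural0 k -> forall c, lift0 k = cl (k (dob D c)).
Proof.
  intros Hk c. apply cl_eq. pose proof HC as [_ [Hup _]].
  destruct (Hup (epsilon (proj1 HC) (fun _ => True)) c) as [d [[f] [g]]].
  exists d, f, g. rewrite !Hk. reflexivity.
Qed.

Lemma lift1_cl uop : natural1 uop -> forall a (x : dob D a), lift1 uop (cl x) = cl (uop _ x).
Proof. intros Huop a x. apply cl_eq, eventually_eq_natural1, rep_cl. exact Huop. Qed.

Lemma lift2_cl bop : natural2 bop ->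
  forall c (x y : dob D c), lift2 bop (cl x) (cl y) = cl (bop _ x y).
Proof.
  intros Hbop c x y. unfold lift2.
  generalize (rep_cl x) (rep_cl y).
  destruct (rep (cl x)) as [a xa], (rep (cl y)) as [b yb]. simpl. intros Ex Ey.
  destruct (upper_bound a b) as [d [f g]]. simpl.
  apply cl_eq, eventually_eq_natural2; [exact Hbop | |].
  - exact (eventually_eq_trans (eventually_eq_sym (eventually_eq_dmap f xa)) Ex).
  - exact (eventually_eq_trans (eventually_eq_sym (eventually_eq_dmap g yb)) Ey).
Qed.


Lemma cl_eq_same_stage c (x y : dob D c) :
  cl x = cl y -> exists e (h : hom c e), dmap D h x = dmap D h y.
Proof.
  intro E. destruct (eventually_eq_along (idc c) (idc c) (cl_inj E)) as [e [h Eh]].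
  rewrite !dmap_id in Eh. exists e, h. exact Eh.
Qed.

Ltac common_stage2 p q := destruct (cl_common2 p q) as [? [? [? [-> ->]]]].
Ltac common_stage3 p q r := destruct (cl_common3 p q r) as [? [? [? [? [-> [-> ->]]]]]].

Definition filtered_colimit : ULG.
Proof.
  refine {| car := colim_car;
    zero := lift0 zero; add := lift2 add; opp := lift1 opp;
    meet := lift2 meet; join := lift2 join; unit := lift0 unit |};
  pose proof (lift2_cl natural2_add) as Hadd;
  pose proof (lift2_cl natural2_meet) as Hmeet;
  pose proof (lift2_cl natural2_join) as Hjoin.
  - intros p q r. common_stage3 p q r. rewrite !Hadd, addA. reflexivity.
  - intros p q. common_stage2 p q. rewrite !Hadd, addC. reflexivity.
  - intros p. destruct (cl_surj p) as [[a x] ->].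
    rewrite (lift0_cl natural0_zero a), Hadd, add0. reflexivity.
  - intros p. destruct (cl_surj p) as [[a x] ->].
    rewrite (lift1_cl natural1_opp), (lift0_cl natural0_zero a), Hadd, addN. reflexivity.
  - intros p q. common_stage2 p q. rewrite !Hmeet, meetC. reflexivity.
  - intros p q. common_stage2 p q. rewrite !Hjoin, joinC. reflexivity.
  - intros p q r. common_stage3 p q r. rewrite !Hmeet, meetA. reflexivity.
  - intros p q r. common_stage3 p q r. rewrite !Hjoin, joinA. reflexivity.
  - intros p q. common_stage2 p q. rewrite Hjoin, Hmeet, meet_join. reflexivity.
  - intros p q. common_stage2 p q. rewrite Hmeet, Hjoin, join_meet. reflexivity.
  - intros p q r. common_stage3 p q r. rewrite Hmeet. intro E.
    destruct (cl_eq_same_stage E) as [e [h Eh]].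
    rewrite !Hadd, Hmeet, <- (cl_dmap h (meet _ _)), <- (cl_dmap h (add _ _)), h_meet, !h_add.
    rewrite le_add; [reflexivity|]. rewrite <- h_meet. exact Eh.
  - pose proof HC as [[a] _].
    rewrite (lift0_cl natural0_zero a), (lift0_cl natural0_unit a), Hmeet, unit_ge0.
    reflexivity.
Defined.

Definition colimit_inj a : UHom (dob D a) filtered_colimit.
Proof.
  refine {| hfun := fun x => cl x : filtered_colimit |}; intros; simpl.
  - symmetry. apply (lift2_cl natural2_add).
  - symmetry. apply (lift2_cl natural2_meet).
  - symmetry. apply (lift2_cl natural2_join).
  - symmetry. apply (lift0_cl natural0_unit).
Defined.

Lemma colimit_inj_cocone : cocone colimit_inj.
Proof. intros a b f x. apply cl_dmap. Qed.

Lemma colimit_inj_surjective : jointly_surjective colimit_inj.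
Proof. intro p. destruct (cl_surj p) as [[a x] ->]. exists a, x. reflexivity. Qed.

Lemma colimit_inj_equal_eventually : equal_eventually colimit_inj.
Proof. intros a b x y. apply cl_inj. Qed.

End FilteredColimit.

Lemma unital_colimit_concrete (C : Cat) (D : Diagram C) (L : ULG)
    (lam : forall a, UHom (dob D a) L) (HC : filtered C) :
  is_colimit_in unital_cat lam -> jointly_surjective lam /\ equal_eventually lam.
Proof.
  intros [Hlam Huniv].
  destruct (Huniv _ _ I (colimit_inj_cocone HC)) as [[k Hk] _].
  destruct (concrete_colimit (lam := colimit_inj D HC) unital_cat HC (colimit_inj_cocone HC)
              (colimit_inj_surjective (HC:=HC)) (colimit_inj_equal_eventually (HC:=HC))) as [_ Huniv'].
  destruct (Huniv' L lam I Hlam) as [[j Hj] _].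
  assert (Hjk : forall y, j (k y) = y).
  { apply (proj2 (Huniv L lam I Hlam) (ucomp j k) (uid L)); intros a x; simpl;
      [rewrite Hk, Hj|]; reflexivity. }
  split.
  - intro y. destruct (colimit_inj_surjective (HC:=HC) (k y)) as [a [x Ex]].
    exists a, x. rewrite <- Hj, Ex, Hjk. reflexivity.
  - intros a b x y E. apply (colimit_inj_equal_eventually (HC:=HC)). rewrite <- !Hk, E. reflexivity.
Qed.

Definition bounded_diagram (C : Cat) (D : Diagram C) : Diagram C.
Proof.
  refine {| dob a := bounded_part (dob D a); dmap a b f := bounded_map (dmap D f) |};
  intros; apply val_inj; simpl.
  - apply dmap_id.
  - apply dmap_comp.
Defined.

Lemma bounded_part_colimit (C : Cat) (D : Diagram C) (L : ULG)
    (lam : forall a, UHom (dob D a) L) :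
  filtered C -> cocone lam -> jointly_surjective lam -> equal_eventually lam ->
  is_colimit_in strong_cat
    (fun a => bounded_map (lam a) : UHom (dob (bounded_diagram D) a) (bounded_part L)).
Proof.
  intros HC Hlam Hsurj Heq. apply concrete_colimit; [exact HC | | |].
  - intros a b f x. apply val_inj, Hlam.
  - intros [y [n Hn]]. destruct (Hsurj y) as [a [x <-]].
    exists a, (exist _ (clamp n x) (ex_intro _ n (clamp_bounded_by n x))).
    apply val_inj. simpl. rewrite h_clamp. apply clamp_id, Hn.
  - intros a b [x Hx] [y Hy] E. apply (f_equal (@proj1_sig _ _)) in E.
    destruct (Heq _ _ _ _ E) as [c [f [g Efg]]]. exists c, f, g. apply val_inj, Efg.
Qed.

Section BoundedCoreflection.
Variables (M : ULG) (hM : strong_unit M).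

Lemma incl_corestr (N : ULG) (h : UHom M N) :
  ucomp (bounded_incl N) (bounded_corestr hM h) = h.
Proof. apply uhom_ext. reflexivity. Qed.

Lemma corestr_comp (A B : ULG) (h : UHom A B) (g : UHom M A) :
  bounded_corestr hM (ucomp h g) = ucomp (bounded_map h) (bounded_corestr hM g).
Proof. apply uhom_ext. intro. apply val_inj. reflexivity. Qed.

Lemma incl_bounded_map (A B : ULG) (h : UHom A B) (g : UHom M (bounded_part A)) :
  ucomp (bounded_incl B) (ucomp (bounded_map h) g) = ucomp h (ucomp (bounded_incl A) g).
Proof. apply uhom_ext. reflexivity. Qed.

(* For strong [M], [Hom(M, N)] and [Hom(M, bounded_part N)] are naturally
   isomorphic, so preservation of a colimit transfers along [bounded_part]. *)
Lemma hom_preserves_of_bounded (C : Cat) (D : Diagram C) (L : ULG)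
    (lam : forall a, UHom (dob D a) L) :
  hom_preserves M
    (fun a => bounded_map (lam a) : UHom (dob (bounded_diagram D) a) (bounded_part L)) ->
  hom_preserves M lam.
Proof.
  intros Hpres X c Hc.
  pose (c' a (g : UHom M (bounded_part (dob D a))) := c a (ucomp (bounded_incl _) g)).
  assert (Hc' : forall a b (f : hom a b) (g : UHom M (dob (bounded_diagram D) a)),
             c' b (ucomp (dmap (bounded_diagram D) f) g) = c' a g).
  { intros a b f g. unfold c'. simpl. rewrite incl_bounded_map. apply Hc. }
  destruct (Hpres X c' Hc') as [[phi Hphi] Huniq]. split.
  - exists (fun h => phi (bounded_corestr hM h)). intros a g.
    rewrite corestr_comp. refine (eq_trans (Hphi a _) _). unfold c'. rewrite incl_corestr. reflexivity.
  - intros phi1 phi2 H1 H2 h. rewrite <- (incl_corestr h).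
    apply (Huniq (fun g => phi1 (ucomp (bounded_incl L) g))
                 (fun g => phi2 (ucomp (bounded_incl L) g)));
      intros a g; unfold c'; [rewrite <- H1 | rewrite <- H2];
      f_equal; apply (incl_bounded_map (lam a) g).
Qed.

End BoundedCoreflection.

Lemma fin_presentable_unital_of_strong (M : ULG) :
  strong_unit M -> fin_presentable_in strong_cat M -> fin_presentable_in unital_cat M.
Proof.
  intros hM HM C D L lam HC _ _ Hcolim.
  destruct (unital_colimit_concrete HC Hcolim) as [Hsurj Heq].
  apply (hom_preserves_of_bounded hM), (HM C (bounded_diagram D)); [exact HC | | |].
  - intro a. apply bounded_part_strong.
  - apply bounded_part_strong.
  - apply bounded_part_colimit; [exact HC | apply Hcolim | exact Hsurj | exact Heq].
Qed.

Theorem proposition5p4 (M : ULG) (hM : strong_unit M) :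
  fin_presentable_in strong_cat M <-> fin_presentable_in unital_cat M.
Proof.
  split.
  - apply fin_presentable_unital_of_strong, hM.
  - apply fin_presentable_strong_of_unital.
Qed.
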